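(* If the toric algebra $A_{\mathscr{E}}$ is consistent, then $x^{\operatorname{div}(a)}$ divides $\prod_{\rho\in\sigma(1)}x_\rho$ for every arrow $a\in Q_1$.
   Context: Let $\mathbb{k}$ be an algebraically closed field and $X=\operatorname{Spec}R$ a normal affine toric variety of dimension $n$ with a torus-fixed point, $R=\mathbb{k}[\sigma^\vee\cap M]$, $\sigma\subset N\otimes\mathbb{R}$ strongly convex rational polyhedral. Let $\sigma(1)$ be the rays, $d=|\sigma(1)|$, $v_\rho$ primitive generators, $D_\rho$ toric prime divisors, torus-invariant divisors identified with $\mathbb{Z}^d$, $\deg:\mathbb{Z}^d\to\operatorname{Cl}(X)$ the class map with kernel the image of $M$ under $u\mapsto\sum\langle u,v_\rho\rangle D_\rho$. Cox ring $\mathbb{k}[x_\rho]$, $x^D=\prod x_\rho^{D_\rho}$. Assume $X$ is Gorenstein: $(1,\dots,1)\in\mathbb{Z}^d$ lies in the image of $M$. Let $\mathscr{E}=(E_0=\mathcal{O}_X,E_1,\dots,E_r)$ be pairwise distinct rank one reflexive sheaves, $E_i=\mathcal{O}_X(D_i')$, and $Q$ its quiver of sections: vertices $0,\dots,r$; an arrow $a:i\to j$ with label $\operatorname{div}(a)\in\mathbb{N}^d$ for each irreducible $T_M$-invariant section $x^{\operatorname{div}(a)}$ of $\operatorname{Hom}(E_i,E_j)\cong H^0(\mathcal{O}_X(D_j'-D_i'))$ (irreducible: not in the image of multiplication through any $E_k$, $k\neq i,j$). Paths compose right to left; $\operatorname{div}(p)$ is the sum of labels of arrows of $p$. $J_{\mathscr{E}}$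 is generated by $p^+-p^-$ over pairs of paths with equal head, tail and label; $A_{\mathscr{E}}=\mathbb{k}Q/J_{\mathscr{E}}$. A cycle $p$ is anticanonical if $x^{\operatorname{div}(p)}=\prod_\rho x_\rho$. For a path $q$, $\partial_qW$ is the sum of all paths $p$ with $\mathsf{t}(p)=\mathsf{h}(q)$, $\mathsf{h}(p)=\mathsf{t}(q)$, $x^{\operatorname{div}(p)}=\prod_\rho x_\rho/x^{\operatorname{div}(q)}$. $\mathscr{P}$ is the set of paths $q$ with $\partial_qW$ a sum of precisely two paths sharing neither initial nor final arrow; $J_W$ is generated by $p^+-p^-$ whenever $\partial_qW=p^++p^-$, $q\in\mathscr{P}$. $A_{\mathscr{E}}$ is consistent if $J_W=J_{\mathscr{E}}$. *)

From HB Require Import structures.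
From mathcomp Require Import all_boot all_order all_algebra.

Set Implicit Arguments.
Unset Strict Implicit.
Unset Printing Implicit Defensive.

Import Order.TTheory GRing.Theory Num.Theory.
Local Open Scope ring_scope.

Section Toric.

(* d = |sigma(1)|, n = rank of N, r+1 = number of sheaves *)
Variables (d n r : nat).
(* primitive ray generators v_rho in N = Z^n *)
Variable v : 'I_d -> 'I_n -> int.
(* torus-invariant divisors D'_i, i = 0..r, as elements of Z^d *)
Variable D' : 'I_r.+1 -> 'I_d -> int.

Definition pairing (u w : 'I_n -> int) : int := \sum_(k < n) u k * w k.

Definition inM (D : 'I_d -> int) : Prop :=
  exists u : 'I_n -> int, forall rho, D rho = pairing u (v rho).

Definition lin_equiv (D1 D2 : 'I_d -> int) : Prop :=
  inM (fun rho => D1 rho - D2 rho).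

Definition ray_mx : 'M[rat]_(d, n) := \matrix_(i, j) (v i j)%:~R.

(* sigma = cone(v_rho) is a strongly convex rational polyhedral cone,
   the v_rho are primitive and are exactly the rays of sigma, and
   sigma is full dimensional (X has a torus-fixed point). *)
Record toric_cone : Prop := {
  tc_primitive : forall rho (m : int) (w : 'I_n -> int),
      (forall k, v rho k = m * w k) -> `|m| = 1;
  tc_strongly_convex : forall c : 'I_d -> rat,
      (forall rho, 0 <= c rho) ->
      (forall k, \sum_(rho < d) c rho * (v rho k)%:~R = 0) ->
      forall rho, c rho = 0;
  tc_rays_extremal : forall rho, ~ exists c : 'I_d -> rat,
      [/\ forall rho', 0 <= c rho', c rho = 0 &
          forall k, (v rho k)%:~R = \sum_(rho' < d) c rho' * (v rho' k)%:~R];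
  tc_full_dim : \rank ray_mx = n
}.

Definition gorenstein : Prop := inM (fun _ => 1).

Definition monomial_divides (u w : {ffun 'I_d -> nat}) : Prop :=
  forall rho, (u rho <= w rho)%N.

Definition ones : {ffun 'I_d -> nat} := [ffun _ => 1%N].

(* x^u (u in N^d) is a T_M-invariant section of Hom(E_i,E_j) = H^0(O(D'_j - D'_i)) *)
Definition is_section (i j : 'I_r.+1) (u : {ffun 'I_d -> nat}) : Prop :=
  lin_equiv (fun rho => (u rho)%:Z) (fun rho => D' j rho - D' i rho).

Definition arrow := ('I_r.+1 * 'I_r.+1 * {ffun 'I_d -> nat})%type.
Definition atail (a : arrow) : 'I_r.+1 := a.1.1.
Definition ahead (a : arrow) : 'I_r.+1 := a.1.2.
Definition alabel (a : arrow) : {ffun 'I_d -> nat} := a.2.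

(* arrows of the quiver of sections: irreducible nonconstant sections *)
Definition is_arrow (a : arrow) : Prop :=
  let: (i, j, u) := a in
  [/\ is_section i j u,
      exists rho, u rho != 0%N &
      ~ exists k u1 u2, [/\ k != i, k != j, is_section i k u1,
                            is_section k j u2 &
                            forall rho, u rho = (u1 rho + u2 rho)%N]].

(* a path: starting vertex and the list of arrows in the order traversed *)
Definition path := ('I_r.+1 * seq arrow)%type.
Definition ptail (p : path) : 'I_r.+1 := p.1.
Definition phead (p : path) : 'I_r.+1 := last p.1 (map ahead p.2).

Fixpoint chain (t : 'I_r.+1) (s : seq arrow) : Prop :=
  match s with
  | [::] => True
  | a :: s' => atail a = t /\ chain (ahead a) s'
  end.

Definition is_path (p : path) : Prop :=
  (forall a, a \in p.2 -> is_arrow a) /\ chain p.1 p.2.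

Definition plabel (p : path) : {ffun 'I_d -> nat} :=
  [ffun rho => \sum_(a <- p.2) alabel a rho].

(* traverse p, then q  (i.e. q * p with right-to-left composition) *)
Definition pcat (p q : path) : path := (p.1, p.2 ++ q.2).

Definition first_arrow (p : path) : option arrow := ohead p.2.
Definition last_arrow (p : path) : option arrow := ohead (rev p.2).

(* The two-sided ideal of the path algebra kQ (elements = functions
   path -> K, coefficient of each path) generated by the elements
   p - q for (p,q) in G: the K-span of the elements a.p.b - a.q.b,
   a, b paths composable with p (and q). *)
Definition ideal_gen (K : fieldType) (G : path -> path -> Prop)
    (f : path -> K) : Prop :=
  exists s : seq (K * path * path * path * path),
    (forall t, t \in s -> let: (c, a, p, q, b) := t in
       [/\ G p q, is_path a, is_path b, phead a = ptail p & phead p = ptail b])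
    /\ forall x, f x = \sum_(t <- s) let: (c, a, p, q, b) := t in
         c * ((x == pcat (pcat a p) b)%:R - (x == pcat (pcat a q) b)%:R).

Definition GE (p q : path) : Prop :=
  [/\ is_path p, is_path q, ptail p = ptail q, phead p = phead q &
      plabel p = plabel q].

(* p is a summand of \partial_q W *)
Definition dW (q p : path) : Prop :=
  [/\ is_path p, ptail p = phead q, phead p = ptail q &
      forall rho, (plabel p rho + plabel q rho)%N = 1%N].

(* generators of J_W: \partial_q W = p1 + p2 with q in the set P *)
Definition GW (p1 p2 : path) : Prop :=
  exists q, [/\ is_path q, p1 <> p2, dW q p1, dW q p2 &
     [/\ (forall p, dW q p -> p = p1 \/ p = p2),
          first_arrow p1 <> first_arrow p2 &
          last_arrow p1 <> last_arrow p2]].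

Definition consistent (K : fieldType) : Prop :=
  forall f : path -> K, ideal_gen GW f <-> ideal_gen GE f.

End Toric.

(** If an arrow [a : i -> j] had a label that is not squarefree, compose it with
    anticanonical cycles (which exist because every nonzero section factors into
    arrows and the Gorenstein condition makes [prod x_rho] a section of every
    [End(E_i)]): [c a] and [a c'] have the same label, so [c a - a c'] lies in
    [J_E].  The generators of [J_W] only rewrite subpaths whose arrows all have
    squarefree labels, so they preserve the list of non-squarefree arrows of a
    path together with the labels of the subpaths preceding them.  This list
    is [[(a, 0)]] for [c a] and [[(a, prod x_rho)]] for [a c'], hence
    [c a - a c'] is not in [J_W], contradicting consistency. *)
From Pilot Require Import Defs.
From Stdlib Require Import Classical.
From mathcomp Require Import all_boot all_order all_algebra zify.

Set Implicit Arguments.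
Unset Strict Implicit.
Unset Printing Implicit Defensive.

Import GRing.Theory.
Local Open Scope ring_scope.

Lemma sum_mul_delta (T : eqType) (K : nzRingType) (s : seq T) (F : T -> K) w :
  uniq s -> w \in s -> \sum_(z <- s) F z * (z == w)%:R = F w.
Proof.
move=> uniq_s w_s; rewrite (big_rem w) //= eqxx mulr1 big_seq big1 ?addr0 //.
by move=> z; rewrite rem_filter // mem_filter => /andP[/negbTE-> _]; rewrite mulr0.
Qed.

Section QuiverOfSections.

Variables (d n r : nat) (v : 'I_d -> 'I_n -> int) (D' : 'I_r.+1 -> 'I_d -> int).

Local Notation label := {ffun 'I_d -> nat}.
Local Notation arrow := (arrow d r).
Local Notation path := (Defs.path d r).
Local Notation is_section := (is_section v D').
Local Notation is_arrow := (is_arrow v D').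
Local Notation is_path := (is_path v D').
Local Notation dW := (dW v D').
Local Notation GW := (GW v D').
Local Notation ideal_gen := (ideal_gen v D').

Lemma label0E rho : (0 : label) rho = 0%N.
Proof. exact: ffunE. Qed.

Definition label_deg (u : label) : nat := (\sum_rho u rho)%N.

Lemma label_degD (u1 u2 : label) : label_deg (u1 + u2) = (label_deg u1 + label_deg u2)%N.
Proof. by rewrite -big_split; apply: eq_bigr => rho _; rewrite ffunE. Qed.

Lemma label_neq0P (u : label) : (exists rho, u rho != 0%N) <-> u != 0.
Proof.
split=> [[rho nz_rho]|nz_u].
  by apply: contraNneq nz_rho => ->; rewrite label0E.
apply/existsP; apply: contraNT nz_u; rewrite negb_exists => /forallP u0.
by apply/eqP/ffunP => rho; rewrite label0E; apply/eqP/negbNE/u0.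
Qed.

Lemma label_deg_gt0 (u : label) : u != 0 -> (0 < label_deg u)%N.
Proof.
case/label_neq0P => rho nz_rho; rewrite /label_deg (bigD1 rho) //=.
by rewrite lt0n addn_eq0 negb_and nz_rho.
Qed.

Lemma ones_neq0 : (0 < d)%N -> ones d != 0.
Proof. by move=> d_gt0; apply/label_neq0P; exists (Ordinal d_gt0); rewrite ffunE. Qed.

Definition squarefree (u : label) : bool := [forall rho, u rho <= 1]%N.

Lemma squarefreeP (u : label) : reflect (monomial_divides u (ones d)) (squarefree u).
Proof.
apply: (iffP forallP) => u_le rho; have := u_le rho; by rewrite ffunE.
Qed.

Lemma plabelE (p : path) : plabel p = \sum_(a <- p.2) alabel a.
Proof. by rewrite sum_ffun. Qed.

Lemma is_path_nil t : is_path (t, [::]).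
Proof. by split. Qed.

Lemma phead_cat i (s1 s2 : seq arrow) : phead (i, s1 ++ s2) = phead (phead (i, s1), s2).
Proof. by rewrite /phead map_cat last_cat. Qed.

Lemma chain_cat t (s1 s2 : seq arrow) :
  chain t (s1 ++ s2) <-> chain t s1 /\ chain (phead (t, s1)) s2.
Proof. by elim: s1 t => [|a s1 IH] t /=; [tauto | have := IH (ahead a); tauto]. Qed.

Section Concatenation.

Variables p q : path.
Hypothesis pq : ptail q = phead p.

Lemma is_path_cat : is_path p -> is_path q -> is_path (pcat p q).
Proof.
case: p q pq => i s [k t] /= -> [arr_s chain_s] [arr_t chain_t]; split.
  by move=> a; rewrite mem_cat => /orP[/arr_s | /arr_t].
exact/chain_cat.
Qed.

Lemma phead_pcat : phead (pcat p q) = phead q.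
Proof. by case: p q pq => i s [k t] /= ->; rewrite phead_cat. Qed.

Lemma plabel_pcat : plabel (pcat p q) = plabel p + plabel q.
Proof. by rewrite !plabelE big_cat. Qed.

End Concatenation.

Lemma squarefree_subpath (p : path) :
  squarefree (plabel p) -> {in p.2, forall a, squarefree (alabel a)}.
Proof.
move=> /forallP sf_p a a_p; apply/forallP => rho; apply: leq_trans (sf_p rho).
by rewrite plabelE sum_ffunE (big_rem a) //= leq_addr.
Qed.

Lemma squarefree_anticanonical t (s : seq arrow) :
  plabel (t, s) = ones d -> {in s, forall a, squarefree (alabel a)}.
Proof. by move=> lab_s; apply: (squarefree_subpath (p := (t, s))); rewrite lab_s; apply/squarefreeP. Qed.

Section Factorization.

Hypothesis distinct : forall i j, i != j -> ~ lin_equiv v (D' i) (D' j).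

Lemma section0_loop i j : is_section i j 0 -> i = j.
Proof.
move=> [w Hw]; case: (eqVneq i j) => // /distinct[]; exists w => rho.
by rewrite -Hw label0E sub0r opprB.
Qed.

Lemma section_path u i j : is_section i j u -> u != 0 ->
  exists s, [/\ is_path (i, s), phead (i, s) = j & plabel (i, s) = u].
Proof.
have [m] := ubnP (label_deg u); elim: m => // m IH in u i j *.
move=> deg_u sec_u nz_u.
have [[k [u1 [u2 [ki kj sec1 sec2 u12]]]] | irr] := classic
  (exists k u1 u2, [/\ k != i, k != j, is_section i k u1, is_section k j u2 &
                      forall rho, u rho = (u1 rho + u2 rho)%N]).
  have {u12}u_eq : u = u1 + u2 by apply/ffunP => rho; rewrite ffunE u12.
  subst u.
  have nz1 : u1 != 0 by apply: contra_neq ki => u10; rewrite u10 in sec1; rewrite (section0_loop sec1).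
  have nz2 : u2 != 0 by apply: contra_neq kj => u20; rewrite u20 in sec2; rewrite (section0_loop sec2).
  have := label_deg_gt0 nz1; have := label_deg_gt0 nz2.
  rewrite label_degD in deg_u => deg2 deg1.
  have [s1 [path1 head1 <-]] := IH u1 i k ltac:(lia) sec1 nz1.
  have [s2 [path2 <- <-]] := IH u2 k j ltac:(lia) sec2 nz2.
  have s12 : ptail (k, s2) = phead (i, s1) by rewrite head1.
  exists (s1 ++ s2); split; [exact: is_path_cat s12 path1 path2 | exact: phead_pcat s12 |].
  exact: plabel_pcat (i, s1) (k, s2).
exists [:: (i, j, u)]; split=> //; last by rewrite plabelE big_seq1.
split=> [a|//]; rewrite inE => /eqP ->; split=> //; exact/label_neq0P.
Qed.

Lemma anticanonical_cycle : gorenstein v -> (0 < d)%N -> forall t,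
  exists s, [/\ is_path (t, s), phead (t, s) = t & plabel (t, s) = ones d].
Proof.
move=> [w Hw] d_gt0 t; apply: section_path.
  by exists w => rho; rewrite -Hw ffunE subrr subr0.
exact: ones_neq0.
Qed.

End Factorization.

Fixpoint defects (l : label) (s : seq arrow) : seq (arrow * label) :=
  if s is a :: s' then
    (if squarefree (alabel a) then [::] else [:: (a, l)]) ++ defects (l + alabel a) s'
  else [::].

Lemma defects_cat l (s1 s2 : seq arrow) :
  defects l (s1 ++ s2) = defects l s1 ++ defects (l + \sum_(a <- s1) alabel a) s2.
Proof.
elim: s1 l => [|a s1 IH] l /=; first by rewrite big_nil addr0.
by rewrite IH big_cons addrA catA.
Qed.

Lemma defects_squarefree l (s : seq arrow) :
  {in s, forall a, squarefree (alabel a)} -> defects l s = [::].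
Proof.
elim: s l => [|a s IH] l //= sf_s.
by rewrite sf_s ?mem_head // IH // => b b_s; rewrite sf_s // in_cons b_s orbT.
Qed.

Lemma defects_cons l a (s : seq arrow) :
  ~~ squarefree (alabel a) -> {in s, forall e, squarefree (alabel e)} ->
  defects l (a :: s) = [:: (a, l)].
Proof. by move=> /negbTE /= -> sf_s; rewrite defects_squarefree. Qed.

Lemma defects_cats1 l (s : seq arrow) a :
  {in s, forall e, squarefree (alabel e)} -> ~~ squarefree (alabel a) ->
  defects l (s ++ [:: a]) = [:: (a, l + \sum_(e <- s) alabel e)].
Proof. by move=> sf_s /negbTE sf_a; rewrite defects_cat defects_squarefree //= sf_a cats0. Qed.

Lemma squarefree_dW (q p : path) : dW q p -> squarefree (plabel p).
Proof. by case=> _ _ _ W; apply/forallP => rho; rewrite -(W rho) leq_addr. Qed.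

Lemma defects_GW (p q A B : path) l : GW p q ->
  defects l (pcat (pcat A p) B).2 = defects l (pcat (pcat A q) B).2.
Proof.
case=> q0 [_ _ dWp dWq _].
have lab_pq : plabel p = plabel q.
  apply/ffunP => rho; apply/eqP; rewrite -(eqn_add2r (plabel q0 rho)).
  by case: dWp => _ _ _ ->; case: dWq => _ _ _ ->.
rewrite /= !defects_cat !big_cat -!plabelE lab_pq.
by rewrite (defects_squarefree _ (squarefree_subpath (squarefree_dW dWp)))
           (defects_squarefree _ (squarefree_subpath (squarefree_dW dWq))).
Qed.

Section InvariantFunctional.

Variables (K : fieldType) (G : path -> path -> Prop) (P : pred path).
Hypothesis P_inv : forall p q, G p q ->
  forall A B, P (pcat (pcat A p) B) = P (pcat (pcat A q) B).

(** Summing [f] over the paths satisfying [P] is a linear functional on the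
    finitely supported [f], and it kills the generators of the ideal. *)
Lemma ideal_gen_invariant (f : path -> K) : ideal_gen G f ->
  exists L, [/\ uniq L, forall z, z \notin L -> f z = 0 &
                \sum_(z <- L) (P z)%:R * f z = 0].
Proof.
case=> s [gen_s f_s].
pose ends (t : K * path * path * path * path) :=
  let: (_, A, p, q, B) := t in [:: pcat (pcat A p) B; pcat (pcat A q) B].
have ends_L t z : t \in s -> z \in ends t -> z \in undup (flatten (map ends s)).
  by move=> t_s z_t; rewrite mem_undup; apply/flattenP; exists (ends t); rewrite ?map_f.
exists (undup (flatten (map ends s))); split=> [|z z_L|]; first exact: undup_uniq.
  rewrite f_s big_seq big1 // => t t_s.
  have z_t w : w \in ends t -> (z == w) = false.
    by move=> w_t; apply: contraNF z_L => /eqP ->; exact: ends_L t_s w_t.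
  case: t t_s z_t => [[[[c A] p] q] B] _ z_t.
  by rewrite !z_t ?subrr ?mulr0 // !inE eqxx ?orbT.
under eq_bigr do rewrite f_s big_distrr.
rewrite exchange_big big_seq big1 //= => -[[[[c A] p] q] B] t_s.
have [Gpq _ _ _ _] := gen_s _ t_s.
under eq_bigr do rewrite mulrCA mulrBr.
rewrite -big_distrr sumrB !sum_mul_delta ?undup_uniq ?(P_inv Gpq) ?subrr /= ?mulr0 //.
all: by apply: ends_L t_s _; rewrite !inE eqxx ?orbT.
Qed.

Lemma ideal_gen_delta_eq (x y : path) :
  ideal_gen G (fun z => (z == x)%:R - (z == y)%:R : K) -> P x = P y.
Proof.
case/ideal_gen_invariant => L [uniq_L supp_L sum_L].
have [-> //|neq_xy] := eqVneq x y.
have in_L z : (z == x)%:R - (z == y)%:R != 0 :> K -> z \in L.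
  by apply: contraR => /supp_L ->.
have x_L : x \in L by apply: in_L; rewrite eqxx (negbTE neq_xy) subr0 oner_eq0.
have y_L : y \in L by apply: in_L; rewrite eqxx (eq_sym y) (negbTE neq_xy) sub0r oppr_eq0 oner_eq0.
move: sum_L; under eq_bigr do rewrite mulrBr.
rewrite sumrB !sum_mul_delta // => /eqP; rewrite subr_eq0.
by case: (P x); case: (P y); rewrite //= ?(eq_sym 0) oner_eq0.
Qed.

End InvariantFunctional.

Lemma ideal_gen_generator (K : fieldType) (G : path -> path -> Prop) (p q : path) :
  ptail p = ptail q -> G p q -> ideal_gen G (fun z => (z == p)%:R - (z == q)%:R : K).
Proof.
move=> pq Gpq; exists [:: (1, (ptail p, [::]), p, q, (phead p, [::]))]; split.
  by move=> t; rewrite inE => /eqP ->; split; rewrite ?is_path_nil.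
by case: p q pq {Gpq} => i s [k t] /= <- z; rewrite big_seq1 mul1r /pcat /= !cats0.
Qed.

End QuiverOfSections.

Theorem proposition3p6 (K : closedFieldType) (d n r : nat)
    (v : 'I_d -> 'I_n -> int) (D' : 'I_r.+1 -> 'I_d -> int) :
  toric_cone v ->
  gorenstein v ->
  lin_equiv v (D' ord0) (fun _ => 0) ->
  (forall i j : 'I_r.+1, i != j -> ~ lin_equiv v (D' i) (D' j)) ->
  consistent v D' K ->
  forall a : arrow d r, is_arrow v D' a ->
    monomial_divides (alabel a) (ones d).
Proof.
move=> _ gor _ distinct consistent_E [[i j] u] arr_a.
have [_ [rho0 _] _] := arr_a; set a := (i, j, u) in arr_a *.
apply/squarefreeP; apply: contraT => not_sf.
have d_gt0 : (0 < d)%N by apply: leq_ltn_trans (ltn_ord rho0).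
have [c [path_c head_c lab_c]] := anticanonical_cycle distinct gor d_gt0 j.
have [c' [path_c' head_c' lab_c']] := anticanonical_cycle distinct gor d_gt0 i.
have path_a : is_path v D' (i, [:: a]) by split=> // e; rewrite inE => /eqP ->.
pose P (z : Defs.path d r) := defects 0 z.2 == [:: (a, 0)].
suff : P (i, a :: c) = P (i, c' ++ [:: a]).
  rewrite /P (defects_cons _ not_sf (squarefree_anticanonical lab_c)).
  rewrite (defects_cats1 _ (squarefree_anticanonical lab_c') not_sf) add0r.
  by rewrite -(plabelE (i, c')) lab_c' eqxx => /esym/eqP [] /eqP; rewrite (negbTE (ones_neq0 d_gt0)).
apply: (ideal_gen_delta_eq (v := v) (D' := D') (K := K) (G := GW v D')).
  by move=> p q Gpq A B; rewrite /P (defects_GW A B 0 Gpq).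
apply/consistent_E/(ideal_gen_generator v D' K (p := pcat (i, [:: a]) (j, c))
                                              (q := pcat (i, c') (i, [:: a]))) => //.
split; rewrite ?phead_pcat //.
- exact: is_path_cat.
- by apply: is_path_cat; rewrite ?head_c'.
- by rewrite !plabel_pcat lab_c lab_c' addrC.
Qed.
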